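(* For every integer $n\geq 1$ let $a_n=\sqrt[n+1]{(n+1)!}-\sqrt[n]{n!}$. Then the sequence $(a_n)_{n\geq1}$ is strictly decreasing, i.e. $a_{n+1}<a_n$ for every integer $n\geq 1$.
   Context: The sequence $a_n$ is called the Lalescu sequence. *)

From Stdlib Require Import Reals Lra Lia Factorial.
Open Scope R_scope.

(* n-th root of a positive real x: x^(1/n) via Rpower (x > 0 here since k! >= 1). *)
Definition nth_root (n : nat) (x : R) : R := Rpower x (/ INR n).

Definition lalescu (n : nat) : R :=
  nth_root (S n) (INR (fact (S n))) - nth_root n (INR (fact n)).

From Stdlib Require Import Reals Lra Lia Factorial List.
From Coquelicot Require Import Coquelicot.
Import ListNotations.
Open Scope R_scope.

(* Write b_n = ln (n!) / n, so that the n-th root of n! is e^(b_n). Factoring out e^(b_(n+1)),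
   a_(n+1) < a_n becomes e^(-x) + e^y < 2 with x = b_(n+1) - b_n and y = b_(n+2) - b_(n+1).

   For n >= 8, the bounds n ln n - n + 1 <= ln n! <= (n + 1/2) ln n - n + 1 and Taylor bounds on
   ln (1 + 1/n), ln (1 + 2/n) bound x below and y above; Taylor polynomials then bound e^(-x) and
   e^y. In the variables u = 1/n, t = ln n / n and g = (Stirling gap) / n, 2 minus the sum of
   these Taylor polynomials equals u^2 / ((1+u)(1+2u))^4 times
   -(t/2 - g)^2 + u (1/2 + ...) + u^2 K(u,t,g), all lower-order terms having cancelled. Since
   (ln n)^2 <= 9n/16, the term -(t/2 - g)^2 >= -9u/64 is dominated by u/2, and K >= 0 follows from
   a crude estimate of its monomials on a box.
   The cases n <= 7 are checked with four-digit rational bounds on the roots. *)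

Lemma nondecreasing_from_0 (f df : R -> R) (x : R) : 0 <= x ->
  (forall c, 0 <= c -> is_derive f c (df c)) ->
  (forall c, 0 < c -> 0 <= df c) -> f 0 <= f x.
Proof.
  intros Hx Hf Hdf; destruct (Req_dec x 0) as [->|Hx0]; [lra|].
  destruct (MVT_cor2 f df 0 x) as [c [Hfx Hc]]; [lra| |].
  - intros c Hc; apply is_derive_Reals, Hf; lra.
  - assert (0 <= df c) by (apply Hdf; lra); nra.
Qed.

Lemma exp_le_compat x y : x <= y -> exp x <= exp y.
Proof. intros [Hlt | ->]; [left; apply exp_increasing, Hlt | right; reflexivity]. Qed.

Lemma exp_neg_le_of_derive (G H : R -> R) (x : R) : 0 <= x -> G 0 = 1 ->
  (forall c, is_derive G c (- H c)) -> (forall c, 0 <= c -> H c <= exp (- c)) ->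
  exp (- x) <= G x.
Proof.
  intros Hx HG0 HG HH.
  enough (G 0 - exp (- 0) <= G x - exp (- x)) by (rewrite HG0, Ropp_0, exp_0 in *; lra).
  apply (nondecreasing_from_0 (fun y => G y - exp (- y)) (fun c => exp (- c) - H c) x Hx).
  - intros c _; replace (exp (- c) - H c) with (- H c - - exp (- c)) by ring.
    apply (is_derive_minus G (fun y => exp (- y))); [apply HG | auto_derive; auto; ring].
  - intros c Hc; specialize (HH c); lra.
Qed.

Lemma exp_neg_ge_of_derive (G H : R -> R) (x : R) : 0 <= x -> G 0 = 1 ->
  (forall c, is_derive G c (- H c)) -> (forall c, 0 <= c -> exp (- c) <= H c) ->
  G x <= exp (- x).
Proof.
  intros Hx HG0 HG HH.
  enough (exp (- 0) - G 0 <= exp (- x) - G x) by (rewrite HG0, Ropp_0, exp_0 in *; lra).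
  apply (nondecreasing_from_0 (fun y => exp (- y) - G y) (fun c => H c - exp (- c)) x Hx).
  - intros c _; replace (H c - exp (- c)) with (- exp (- c) - - H c) by ring.
    apply (is_derive_minus (fun y => exp (- y)) G); [auto_derive; auto; ring | apply HG].
  - intros c Hc; specialize (HH c); lra.
Qed.

Lemma exp_neg_le_1 x : 0 <= x -> exp (- x) <= 1.
Proof.
  intros Hx; apply (exp_neg_le_of_derive (fun _ => 1) (fun _ => 0)); auto.
  - intros c; auto_derive; auto; ring.
  - intros c _; left; apply exp_pos.
Qed.

Lemma exp_neg_ge_taylor1 x : 0 <= x -> 1 - x <= exp (- x).
Proof.
  intros Hx; apply (exp_neg_ge_of_derive (fun x => 1 - x) (fun _ => 1)); auto.
  - ring.
  - intros c; auto_derive; auto; ring.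
  - exact exp_neg_le_1.
Qed.

Lemma exp_neg_le_taylor2 x : 0 <= x -> exp (- x) <= 1 - x + x ^ 2 / 2.
Proof.
  intros Hx; apply (exp_neg_le_of_derive (fun x => 1 - x + x ^ 2 / 2) (fun c => 1 - c)); auto.
  - field.
  - intros c; auto_derive; auto; field.
  - exact exp_neg_ge_taylor1.
Qed.

Lemma exp_neg_ge_taylor3 x : 0 <= x -> 1 - x + x ^ 2 / 2 - x ^ 3 / 6 <= exp (- x).
Proof.
  intros Hx.
  apply (exp_neg_ge_of_derive (fun x => 1 - x + x ^ 2 / 2 - x ^ 3 / 6)
           (fun c => 1 - c + c ^ 2 / 2)); auto.
  - field.
  - intros c; auto_derive; auto; field.
  - exact exp_neg_le_taylor2.
Qed.

Lemma exp_neg_le_taylor4 x : 0 <= x -> exp (- x) <= 1 - x + x ^ 2 / 2 - x ^ 3 / 6 + x ^ 4 / 24.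
Proof.
  intros Hx.
  apply (exp_neg_le_of_derive (fun x => 1 - x + x ^ 2 / 2 - x ^ 3 / 6 + x ^ 4 / 24)
           (fun c => 1 - c + c ^ 2 / 2 - c ^ 3 / 6)); auto.
  - field.
  - intros c; auto_derive; auto; field.
  - exact exp_neg_ge_taylor3.
Qed.

Lemma exp_le_poly4 y : 0 <= y -> y <= 1/4 -> exp y <= 1 + y + y ^ 2 / 2 + y ^ 3 / 6 + y ^ 4 / 8.
Proof.
  intros Hy0 Hy1.
  set (D := 1 - y + y ^ 2 / 2 - y ^ 3 / 6).
  assert (HD : D <= exp (- y)) by exact (exp_neg_ge_taylor3 y Hy0).
  assert (HD0 : 0 < D) by (unfold D; nra).
  assert (Hprod : 1 <= (1 + y + y ^ 2 / 2 + y ^ 3 / 6 + y ^ 4 / 8) * D).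
  { assert (0 <= y ^ 4) by (apply pow_le; lra).
    assert (0 <= y ^ 4 * (1/24 - y/8 + y^2*(1/16 - 1/36) - y^3/48)) by (apply Rmult_le_pos; nra).
    unfold D; nra. }
  assert (Hinv : exp y * exp (- y) = 1) by (rewrite <- exp_plus, Rplus_opp_r; apply exp_0).
  assert (0 < exp y) by apply exp_pos.
  nra.
Qed.

Lemma ln_1p_le v : 0 <= v -> ln (1 + v) <= v.
Proof.
  intros Hv; rewrite <- (ln_exp v) at 2.
  apply ln_le; [lra | apply exp_ineq1_le].
Qed.

Lemma ln_1p_ge_of_derive (F f : R -> R) (v : R) : 0 <= v -> F 0 = 0 ->
  (forall c, 0 <= c -> is_derive F c (f c)) -> (forall c, 0 < c -> f c <= / (1 + c)) ->
  F v <= ln (1 + v).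
Proof.
  intros Hv HF0 HF Hf.
  enough (ln (1 + 0) - F 0 <= ln (1 + v) - F v) by (rewrite Rplus_0_r, ln_1, HF0 in *; lra).
  apply (nondecreasing_from_0 (fun y => ln (1 + y) - F y) (fun c => / (1 + c) - f c) v Hv).
  - intros c Hc; replace (/ (1 + c) - f c) with (/ (1 + c) * 1 - f c) by ring.
    apply (is_derive_minus (fun y => ln (1 + y)) F); [auto_derive; lra | apply HF; lra].
  - intros c Hc; specialize (Hf c Hc); lra.
Qed.

Lemma ln_1p_le_of_derive (F f : R -> R) (v : R) : 0 <= v -> F 0 = 0 ->
  (forall c, 0 <= c -> is_derive F c (f c)) -> (forall c, 0 < c -> / (1 + c) <= f c) ->
  ln (1 + v) <= F v.
Proof.
  intros Hv HF0 HF Hf.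
  enough (F 0 - ln (1 + 0) <= F v - ln (1 + v)) by (rewrite Rplus_0_r, ln_1, HF0 in *; lra).
  apply (nondecreasing_from_0 (fun y => F y - ln (1 + y)) (fun c => f c - / (1 + c)) v Hv).
  - intros c Hc; replace (f c - / (1 + c)) with (f c - / (1 + c) * 1) by ring.
    apply (is_derive_minus F (fun y => ln (1 + y))); [apply HF; lra | auto_derive; lra].
  - intros c Hc; specialize (Hf c Hc); lra.
Qed.

Lemma ln_1p_ge_taylor4 v : 0 <= v -> v - v ^ 2 / 2 + v ^ 3 / 3 - v ^ 4 / 4 <= ln (1 + v).
Proof.
  intros Hv; apply (ln_1p_ge_of_derive (fun v => v - v ^ 2 / 2 + v ^ 3 / 3 - v ^ 4 / 4)
                                 (fun c => 1 - c + c ^ 2 - c ^ 3)); auto.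
  - field.
  - intros c _; auto_derive; auto; field.
  - intros c Hc; replace (/ (1 + c)) with (1 - c + c ^ 2 - c ^ 3 + c ^ 4 / (1 + c)) by (field; lra).
    assert (0 <= c ^ 4 / (1 + c)) by (apply Rdiv_le_0_compat; [apply pow_le|]; lra); lra.
Qed.

Lemma ln_1p_le_taylor3 v : 0 <= v -> ln (1 + v) <= v - v ^ 2 / 2 + v ^ 3 / 3.
Proof.
  intros Hv.
  apply (ln_1p_le_of_derive (fun v => v - v ^ 2 / 2 + v ^ 3 / 3) (fun c => 1 - c + c ^ 2)); auto.
  - field.
  - intros c _; auto_derive; auto; field.
  - intros c Hc; replace (/ (1 + c)) with (1 - c + c ^ 2 - c ^ 3 / (1 + c)) by (field; lra).
    assert (0 <= c ^ 3 / (1 + c)) by (apply Rdiv_le_0_compat; [apply pow_le|]; lra); lra.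
Qed.

Lemma ln_1p_ge_pade v : 0 <= v -> 2 * v / (2 + v) <= ln (1 + v).
Proof.
  intros Hv; apply (ln_1p_ge_of_derive (fun v => 2 * v / (2 + v)) (fun c => 4 / (2 + c) ^ 2)); auto.
  - field.
  - intros c Hc; auto_derive; [lra | field; lra].
  - intros c Hc; replace (/ (1 + c)) with (4 / (2 + c) ^ 2 + c ^ 2 / ((1 + c) * (2 + c) ^ 2))
      by (field; lra).
    assert (0 <= c ^ 2 / ((1 + c) * (2 + c) ^ 2)); [|lra].
    apply Rdiv_le_0_compat; [apply pow_le; lra|].
    apply Rmult_lt_0_compat; [lra | apply pow_lt; lra].
Qed.

Lemma ln_le_3_8_mul s : 0 < s -> ln s <= 3/8 * s.
Proof.
  intros Hs.
  (* [ln s <= s / e] from [x <= exp (x - 1)], and [1/e <= 3/8] is the Taylor bound at 1. *)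
  assert (Hexp := exp_ineq1_le (ln s - 1)).
  unfold Rminus in Hexp; rewrite exp_plus, exp_ln in Hexp by lra.
  assert (Hinv := exp_neg_le_taylor4 1 ltac:(lra)).
  assert (0 < exp (- (1))) by apply exp_pos.
  nra.
Qed.

Lemma sqr_ln_le x : 1 <= x -> ln x ^ 2 <= 9/16 * x.
Proof.
  intros Hx.
  assert (Hs : 0 < sqrt x) by (apply sqrt_lt_R0; lra).
  assert (Hsq := sqrt_sqrt x ltac:(lra)).
  assert (Hln : ln x = 2 * ln (sqrt x)).
  { rewrite <- Hsq at 1; rewrite ln_mult by lra; ring. }
  assert (Hln_s := ln_le_3_8_mul (sqrt x) Hs).
  assert (0 <= ln x) by (rewrite <- ln_1; apply ln_le; lra).
  nra.
Qed.

Lemma ln_add_eq x v : 0 < x -> 0 <= v -> ln (x + v) = ln x + ln (1 + v / x).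
Proof.
  intros Hx Hv.
  rewrite <- ln_mult by (try apply Rplus_lt_le_0_compat; try apply Rdiv_le_0_compat; lra).
  f_equal; field; lra.
Qed.

Lemma INR_fact_S k : INR (fact (S k)) = (INR k + 1) * INR (fact k).
Proof. change (fact (S k)) with (S k * fact k)%nat; rewrite mult_INR, S_INR; reflexivity. Qed.

Lemma ln_fact_S k : ln (INR (fact (S k))) = ln (INR k + 1) + ln (INR (fact k)).
Proof.
  rewrite INR_fact_S; apply ln_mult; [pose proof (pos_INR k); lra | apply INR_fact_lt_0].
Qed.

Lemma ln_fact_bounds n : (1 <= n)%nat ->
  INR n * ln (INR n) - INR n + 1 <= ln (INR (fact n)) <=
  (INR n + /2) * ln (INR n) - INR n + 1.
Proof.
  induction n as [|n IH]; intros Hn; [lia|].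
  destruct (Nat.eq_dec n 0) as [->|Hn0]; [simpl; rewrite Rmult_1_l, ln_1; lra|].
  specialize (IH ltac:(lia)).
  assert (HN : 1 <= INR n) by (apply (le_INR 1); lia).
  rewrite ln_fact_S, S_INR, (ln_add_eq (INR n) 1) by lra.
  set (N := INR n) in *; set (al := ln (1 + 1 / N)).
  assert (Hv : 0 <= 1 / N) by (apply Rdiv_le_0_compat; lra).
  (* the step needs exactly [N ln(1 + 1/N) <= 1 <= (N + 1/2) ln(1 + 1/N)] *)
  assert (Hup : N * al <= 1).
  { assert (al <= 1 / N) by exact (ln_1p_le _ Hv).
    apply Rle_trans with (N * (1 / N)); [apply Rmult_le_compat_l | right; field]; lra. }
  assert (Hlow : 1 <= (N + /2) * al).
  { assert (2 * (1 / N) / (2 + 1 / N) <= al) by exact (ln_1p_ge_pade _ Hv).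
    apply Rle_trans with ((N + /2) * (2 * (1 / N) / (2 + 1 / N)));
      [right; field | apply Rmult_le_compat_l]; lra. }
  split; lra.
Qed.

Inductive term3 := Term (c : R) (i j k : nat).

Definition coef (m : term3) : R := let '(Term c _ _ _) := m in c.

Definition eval_term3 (u t g : R) (m : term3) : R :=
  let '(Term c i j k) := m in c * (u ^ i * t ^ j * g ^ k).

Definition poly3 (p : list term3) (u t g : R) : R :=
  fold_right (fun m s => eval_term3 u t g m + s) 0 p.

Lemma monomial_bounds u t g U T G i j k : 0 <= u <= U -> 0 <= t <= T -> 0 <= g <= G ->
  0 <= u ^ i * t ^ j * g ^ k <= U ^ i * T ^ j * G ^ k.
Proof.
  intros Hu Ht Hg.
  assert (Hi := pow_incr u U i Hu); assert (Hj := pow_incr t T j Ht);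
    assert (Hk := pow_incr g G k Hg).
  assert (0 <= u ^ i) by (apply pow_le; lra); assert (0 <= t ^ j) by (apply pow_le; lra);
    assert (0 <= g ^ k) by (apply pow_le; lra).
  split; [apply Rmult_le_pos; [apply Rmult_le_pos|]; lra|].
  apply Rmult_le_compat; [apply Rmult_le_pos; lra | lra | | lra].
  apply Rmult_le_compat; lra.
Qed.

Lemma poly3_bounds p u t g U T G : List.Forall (fun m => 0 <= coef m) p ->
  0 <= u <= U -> 0 <= t <= T -> 0 <= g <= G ->
  0 <= poly3 p u t g <= poly3 p U T G.
Proof.
  intros Hp Hu Ht Hg; induction Hp as [|[c i j k] p Hc _ IH]; simpl in *; [lra|].
  destruct (monomial_bounds u t g U T G i j k Hu Ht Hg).
  split; [|apply Rplus_le_compat; [apply Rmult_le_compat_l|]]; nra.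
Qed.

(* [K] is read off by expanding the left-hand side of [two_sub_taylor_eq]; [K_pos] and [K_neg] hold
   its non-constant monomials with positive and (negated) negative coefficients. *)
Definition K_pos : list term3 := [
  Term (53/6) 0 0 1; Term (1/3) 0 0 3; Term (51/2) 0 1 1; Term (1/3) 0 1 3; Term (1/4) 0 2 1;
  Term (1/12) 0 3 1; Term 8 1 0 0; Term (95/3) 1 0 1; Term (19/6) 1 0 3; Term (159/4) 1 1 1;
  Term (2/3) 1 1 3; Term (19/8) 1 2 1; Term (1/6) 1 3 1; Term (105/2) 2 0 1;
  Term (71/12) 2 0 3; Term (199/6) 2 1 1; Term 2 2 1 3; Term (71/16) 2 2 1; Term (1/2) 2 3 1;
  Term (577/24) 3 0 1; Term (97/36) 3 0 3; Term (551/24) 3 1 1; Term (8/3) 3 1 3;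
  Term (97/48) 3 2 1; Term (2/3) 3 3 1; Term (31/72) 4 0 3; Term (919/48) 4 1 0;
  Term (953/48) 4 1 1; Term (4/3) 4 1 3; Term (31/96) 4 2 1; Term (1/3) 4 3 1;
  Term (37/24) 5 0 3; Term (985/48) 5 1 0; Term (83/12) 5 1 1; Term (37/32) 5 2 1;
  Term (143/144) 6 0 1; Term (5/9) 6 0 3; Term (29/72) 6 1 1; Term (5/12) 6 2 1;
  Term (4/9) 7 0 3; Term (709/192) 7 1 0; Term (115/18) 7 1 1; Term (1/3) 7 2 1;
  Term (2/3) 8 0 3; Term (8323/576) 8 1 0; Term (301/64) 8 1 1; Term (1/2) 8 2 1;
  Term (27319/5184) 9 1 0; Term (14/9) 9 1 1; Term (4685/5184) 10 0 1; Term (307/576) 10 1 1;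
  Term (1/6) 11 0 2; Term (6605/1728) 11 1 0; Term (1/24) 11 2 0; Term (85625/20736) 12 1 0;
  Term (1/4) 12 1 1; Term (11411/10368) 13 1 0; Term (5/576) 14 1 0; Term (35/768) 15 1 0;
  Term (1/24) 16 0 1].

Definition K_neg : list term3 := [
  Term (51/2) 0 0 2; Term (1/6) 0 0 4; Term (53/12) 0 1 0; Term (1/2) 0 1 2; Term (51/8) 0 2 0;
  Term (1/4) 0 2 2; Term (1/24) 0 3 0; Term (1/96) 0 4 0; Term (159/4) 1 0 2; Term (1/3) 1 0 4;
  Term (95/6) 1 1 0; Term (19/4) 1 1 2; Term (159/16) 1 2 0; Term (1/2) 1 2 2;
  Term (19/48) 1 3 0; Term (1/48) 1 4 0; Term (183/8) 2 0 0; Term (199/6) 2 0 2; Term 1 2 0 4;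
  Term (105/4) 2 1 0; Term (71/8) 2 1 2; Term (199/24) 2 2 0; Term (3/2) 2 2 2;
  Term (71/96) 2 3 0; Term (1/16) 2 4 0; Term (2569/18) 3 0 0; Term (551/24) 3 0 2;
  Term (4/3) 3 0 4; Term (577/48) 3 1 0; Term (97/24) 3 1 2; Term (551/96) 3 2 0; Term 2 3 2 2;
  Term (97/288) 3 3 0; Term (1/12) 3 4 0; Term (42449/144) 4 0 0; Term (919/24) 4 0 1;
  Term (953/48) 4 0 2; Term (2/3) 4 0 4; Term (31/48) 4 1 2; Term (953/192) 4 2 0;
  Term 1 4 2 2; Term (31/576) 4 3 0; Term (1/24) 4 4 0; Term (43351/144) 5 0 0;
  Term (985/24) 5 0 1; Term (83/12) 5 0 2; Term (37/16) 5 1 2; Term (83/48) 5 2 0;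
  Term (37/192) 5 3 0; Term (45685/288) 6 0 0; Term (29/72) 6 0 2; Term (143/288) 6 1 0;
  Term (5/6) 6 1 2; Term (29/288) 6 2 0; Term (5/72) 6 3 0; Term (12101/144) 7 0 0;
  Term (709/96) 7 0 1; Term (115/18) 7 0 2; Term (2/3) 7 1 2; Term (115/72) 7 2 0;
  Term (1/18) 7 3 0; Term (1118329/10368) 8 0 0; Term (8323/288) 8 0 1; Term (301/64) 8 0 2;
  Term 1 8 1 2; Term (301/256) 8 2 0; Term (1/12) 8 3 0; Term (402551/5184) 9 0 0;
  Term (27319/2592) 9 0 1; Term (14/9) 9 0 2; Term (7/18) 9 2 0; Term (5903/324) 10 0 0;
  Term (307/576) 10 0 2; Term (4685/10368) 10 1 0; Term (307/2304) 10 2 0;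
  Term (7969/384) 11 0 0; Term (6605/864) 11 0 1; Term (1/6) 11 1 1;
  Term (1963745/62208) 12 0 0; Term (85625/10368) 12 0 1; Term (1/4) 12 0 2;
  Term (1/16) 12 2 0; Term (173197/15552) 13 0 0; Term (11411/5184) 13 0 1;
  Term (27697/20736) 14 0 0; Term (5/288) 14 0 1; Term (214037/31104) 15 0 0;
  Term (35/384) 15 0 1; Term (2974633/497664) 16 0 0; Term (1/48) 16 1 0;
  Term (37429/20736) 17 0 0; Term (37/128) 18 0 0; Term (11/1152) 19 0 0;
  Term (19/6144) 20 0 0].

Definition K (u t g : R) : R := 4 + poly3 K_pos u t g - poly3 K_neg u t g.

Lemma K_nonneg u t g : 0 <= u <= 1/8 -> 0 <= t <= 27/100 -> 0 <= g <= 27/200 -> 0 <= K u t g.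
Proof.
  intros Hu Ht Hg; unfold K.
  assert (Hpos : List.Forall (fun m => 0 <= coef m) K_pos)
    by (repeat (apply List.Forall_cons; [simpl; lra|]); apply List.Forall_nil).
  assert (Hneg : List.Forall (fun m => 0 <= coef m) K_neg)
    by (repeat (apply List.Forall_cons; [simpl; lra|]); apply List.Forall_nil).
  destruct (poly3_bounds K_pos u t g _ _ _ Hpos Hu Ht Hg).
  destruct (poly3_bounds K_neg u t g _ _ _ Hneg Hu Ht Hg).
  enough (poly3 K_neg (1/8) (27/100) (27/200) <= 4) by lra.
  cbv [poly3 K_neg fold_right eval_term3 pow]; lra.
Qed.

(* With [u = 1/n], [t = ln n / n] and [g = (Stirling gap) / n], lower bound for [b_(n+1) - b_n]
   and upper bound for [b_(n+2) - b_(n+1)] (see [exp_sum_lt_2]). *)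
Definition lower_x (u t g : R) : R :=
  u * (1 - t / 2 - u ^ 2 / 2 + u ^ 3 / 3 - u ^ 4 / 4 + g) / (1 + u).

Definition upper_y (u t g : R) : R :=
  u * (1 + u - u ^ 2 + 7/6 * u ^ 3 + 7/3 * u ^ 4 + u ^ 5 / 4 - t / 2 + g) /
  ((1 + u) * (1 + 2 * u)).

Lemma two_sub_taylor_eq u t g : 0 < u ->
  let X := lower_x u t g in let Y := upper_y u t g in
  2 - (1 - X + X ^ 2 / 2 - X ^ 3 / 6 + X ^ 4 / 24) - (1 + Y + Y ^ 2 / 2 + Y ^ 3 / 6 + Y ^ 4 / 8) =
  u ^ 2 / ((1 + u) * (1 + 2 * u)) ^ 4 *
  (- (t / 2 - g) ^ 2 + u * (1/2 + g - t / 2 - 2 * t ^ 2 + 8 * g * (t - g)) + u ^ 2 * K u t g).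
Proof.
  intros Hu X Y; unfold X, Y, lower_x, upper_y, K, poly3, K_pos, K_neg.
  cbv [fold_right eval_term3]; field; lra.
Qed.

Lemma taylor_sum_lt_2 u t g : 0 < u <= 1/8 -> 0 <= t -> t ^ 2 <= 9/16 * u -> 0 <= g <= t / 2 ->
  let X := lower_x u t g in let Y := upper_y u t g in
  (1 - X + X ^ 2 / 2 - X ^ 3 / 6 + X ^ 4 / 24) + (1 + Y + Y ^ 2 / 2 + Y ^ 3 / 6 + Y ^ 4 / 8) < 2.
Proof.
  intros Hu Ht Htu Hg X Y.
  assert (Ht1 : t <= 27/100) by nra.
  assert (HK := K_nonneg u t g ltac:(lra) ltac:(lra) ltac:(lra)).
  assert (Heq := two_sub_taylor_eq u t g ltac:(lra)); cbv zeta in Heq; fold X Y in Heq.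
  enough (0 < u ^ 2 / ((1 + u) * (1 + 2 * u)) ^ 4 *
    (- (t / 2 - g) ^ 2 + u * (1/2 + g - t / 2 - 2 * t ^ 2 + 8 * g * (t - g)) + u ^ 2 * K u t g))
    by lra.
  apply Rmult_lt_0_compat.
  - apply Rdiv_lt_0_compat; apply pow_lt; nra.
  (* [(t/2 - g)^2 <= t^2/4 <= 9u/64] is absorbed by the [u/2] term *)
  - assert ((t / 2 - g) ^ 2 <= 9/64 * u) by nra.
    assert (0 <= g * (t - g)) by nra.
    assert (0 <= u ^ 2 * K u t g) by (apply Rmult_le_pos; [apply pow_le|]; lra).
    assert (0 < u * (1/2 + g - t / 2 - 2 * t ^ 2 + 8 * g * (t - g) - 9/64))
      by (apply Rmult_lt_0_compat; nra).
    lra.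
Qed.

Lemma exp_lower_upper_lt_2 u t g :
  0 < u <= 1/8 -> 0 <= t -> t ^ 2 <= 9/16 * u -> 0 <= g <= t / 2 ->
  exp (- lower_x u t g) + exp (upper_y u t g) < 2.
Proof.
  intros Hu Ht Htu Hg.
  assert (Ht1 : t <= 27/100) by nra.
  assert (HX : 0 <= lower_x u t g).
  { unfold lower_x; apply Rdiv_le_0_compat; [apply Rmult_le_pos|]; nra. }
  assert (HY : 0 <= upper_y u t g <= 1/4).
  { unfold upper_y; split.
    - apply Rdiv_le_0_compat; [apply Rmult_le_pos|]; nra.
    - apply Rmult_le_reg_r with ((1 + u) * (1 + 2 * u)); [nra|].
      unfold Rdiv; rewrite Rmult_assoc, Rinv_l by nra.
      assert (Hu3 := pow_incr u (1/8) 3 ltac:(lra)); assert (Hu4 := pow_incr u (1/8) 4 ltac:(lra));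
        assert (Hu5 := pow_incr u (1/8) 5 ltac:(lra)).
      assert (1 + u - u ^ 2 + 7/6 * u ^ 3 + 7/3 * u ^ 4 + u ^ 5 / 4 - t / 2 + g <= 11/5) by nra.
      nra. }
  assert (H1 := exp_neg_le_taylor4 _ HX).
  assert (H2 := exp_le_poly4 _ (proj1 HY) (proj2 HY)).
  assert (H3 := taylor_sum_lt_2 u t g Hu Ht Htu Hg); cbv zeta in H3.
  lra.
Qed.

(* [N = n], [l = ln n], [al = ln (1 + 1/n)], [be = ln (1 + 2/n)], [A = ln n!]; the exponents are
   [-(b_(n+1) - b_n)] and [b_(n+2) - b_(n+1)]. *)
Lemma exp_sum_lt_2 (N l al be A : R) : 8 <= N -> 0 <= l -> l ^ 2 <= 9/16 * N ->
  1 / N - (1 / N) ^ 2 / 2 + (1 / N) ^ 3 / 3 - (1 / N) ^ 4 / 4 <= al ->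
  be <= 2 / N - (2 / N) ^ 2 / 2 + (2 / N) ^ 3 / 3 ->
  N * l - N + 1 <= A -> A <= (N + /2) * l - N + 1 ->
  exp (- ((N * (l + al) - A) / (N * (N + 1)))) +
  exp (((N + 1) * (l + be) - A - (l + al)) / ((N + 1) * (N + 2))) < 2.
Proof.
  intros HN Hl Hl2 Hal Hbe HA1 HA2.
  set (x := (N * (l + al) - A) / (N * (N + 1))).
  set (y := ((N + 1) * (l + be) - A - (l + al)) / ((N + 1) * (N + 2))).
  set (aL := 1 / N - (1 / N) ^ 2 / 2 + (1 / N) ^ 3 / 3 - (1 / N) ^ 4 / 4) in Hal.
  set (bH := 2 / N - (2 / N) ^ 2 / 2 + (2 / N) ^ 3 / 3) in Hbe.
  set (s := (N + /2) * l - N + 1 - A).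
  set (u := / N); set (t := l / N); set (g := s / N).
  assert (Hu : 0 < u <= 1/8).
  { split; [apply Rinv_0_lt_compat; lra|].
    unfold u; replace (1/8) with (/8) by field; apply Rinv_le_contravar; lra. }
  assert (Ht : 0 <= t) by (apply Rdiv_le_0_compat; lra).
  assert (Htu : t ^ 2 <= 9/16 * u).
  { assert (0 <= (9/16 * N - l ^ 2) / (N * N)) by (apply Rdiv_le_0_compat; nra).
    enough (9/16 * u - t ^ 2 = (9/16 * N - l ^ 2) / (N * N)) by lra.
    unfold u, t; field; lra. }
  assert (Hg : 0 <= g <= t / 2).
  { assert (0 <= (l / 2 - s) / N) by (apply Rdiv_le_0_compat; unfold s; lra).
    split; [apply Rdiv_le_0_compat; unfold s; lra|].
    enough (t / 2 - g = (l / 2 - s) / N) by lra.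
    unfold t, g; field; lra. }
  assert (Hx : x - lower_x u t g = (al - aL) / (N + 1))
    by (unfold x, lower_x, u, t, g, s, aL; field; lra).
  assert (Hy : upper_y u t g - y = ((N + 1) * (bH - be) + (al - aL)) / ((N + 1) * (N + 2)))
    by (unfold y, upper_y, u, t, g, s, aL, bH; field; lra).
  assert (0 <= (al - aL) / (N + 1)) by (apply Rdiv_le_0_compat; lra).
  assert (0 <= ((N + 1) * (bH - be) + (al - aL)) / ((N + 1) * (N + 2)))
    by (apply Rdiv_le_0_compat; nra).
  assert (exp (- x) <= exp (- lower_x u t g)) by (apply exp_le_compat; lra).
  assert (exp y <= exp (upper_y u t g)) by (apply exp_le_compat; lra).
  assert (exp (- lower_x u t g) + exp (upper_y u t g) < 2) by (apply exp_lower_upper_lt_2; lra).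
  lra.
Qed.

Definition log_root_fact (n : nat) : R := / INR n * ln (INR (fact n)).

Lemma lalescu_succ_lt_of_exp n :
  exp (- (log_root_fact (S n) - log_root_fact n)) +
  exp (log_root_fact (S (S n)) - log_root_fact (S n)) < 2 ->
  lalescu (S n) < lalescu n.
Proof.
  change (lalescu (S n) < lalescu n) with
    (exp (log_root_fact (S (S n))) - exp (log_root_fact (S n)) <
     exp (log_root_fact (S n)) - exp (log_root_fact n)).
  set (b0 := log_root_fact n); set (b1 := log_root_fact (S n)); set (b2 := log_root_fact (S (S n))).
  assert (E0 : exp b0 = exp b1 * exp (- (b1 - b0))) by (rewrite <- exp_plus; f_equal; ring).
  assert (E2 : exp b2 = exp b1 * exp (b2 - b1)) by (rewrite <- exp_plus; f_equal; ring).
  rewrite E0, E2; intros H.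
  assert (0 < exp b1) by apply exp_pos.
  nra.
Qed.

Lemma lalescu_succ_lt_large n : (8 <= n)%nat -> lalescu (S n) < lalescu n.
Proof.
  intros Hn; apply lalescu_succ_lt_of_exp; unfold log_root_fact.
  assert (HN : 8 <= INR n) by (replace 8 with (INR 8) by (simpl; lra); apply le_INR; lia).
  destruct (ln_fact_bounds n ltac:(lia)) as [HA1 HA2].
  rewrite !ln_fact_S, !S_INR, (ln_add_eq (INR n) 1), (Rplus_assoc (INR n) 1 1),
    (ln_add_eq (INR n) (1 + 1)) by lra.
  replace (1 + 1) with 2 by ring.
  set (N := INR n) in *; set (A := ln (INR (fact n))) in *; set (l := ln N) in *.
  set (al := ln (1 + 1 / N)); set (be := ln (1 + 2 / N)).
  replace (/ (N + 1) * (l + al + A) - / N * A) with ((N * (l + al) - A) / (N * (N + 1)))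
    by (field; lra).
  replace (/ (N + 2) * (l + be + (l + al + A)) - / (N + 1) * (l + al + A))
    with (((N + 1) * (l + be) - A - (l + al)) / ((N + 1) * (N + 2))) by (field; lra).
  apply exp_sum_lt_2; try lra.
  - apply sqr_ln_le; lra.
  - apply ln_1p_ge_taylor4, Rdiv_le_0_compat; lra.
  - apply ln_1p_le_taylor3, Rdiv_le_0_compat; lra.
Qed.

Lemma nth_root_lt k x p : (0 < k)%nat -> 0 < x -> 0 < p -> x < p ^ k -> nth_root k x < p.
Proof.
  intros Hk Hx Hp H; unfold nth_root, Rpower; rewrite <- (exp_ln p) by lra.
  apply exp_increasing.
  assert (HK : 0 < INR k) by (apply lt_0_INR; lia).
  assert (ln x < INR k * ln p) by (rewrite <- ln_pow by lra; apply ln_increasing; lra).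
  apply Rmult_lt_reg_l with (INR k); [lra|].
  rewrite <- Rmult_assoc, Rinv_r, Rmult_1_l by lra; lra.
Qed.

Lemma nth_root_gt k x p : (0 < k)%nat -> 0 < x -> 0 < p -> p ^ k < x -> p < nth_root k x.
Proof.
  intros Hk Hx Hp H; unfold nth_root, Rpower; rewrite <- (exp_ln p) by lra.
  apply exp_increasing.
  assert (HK : 0 < INR k) by (apply lt_0_INR; lia).
  assert (INR k * ln p < ln x)
    by (rewrite <- ln_pow by lra; apply ln_increasing; [apply pow_lt|]; lra).
  apply Rmult_lt_reg_l with (INR k); [lra|].
  rewrite <- Rmult_assoc, Rinv_r, Rmult_1_l by lra; lra.
Qed.

Lemma lalescu_succ_lt_of_root_bounds n p q r : (0 < n)%nat -> 0 < p -> 0 < q -> 0 < r ->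
  INR (fact n) < p ^ n -> q ^ S n < INR (fact (S n)) -> INR (fact (S (S n))) < r ^ S (S n) ->
  r + p < 2 * q -> lalescu (S n) < lalescu n.
Proof.
  intros Hn Hp Hq Hr H0 H1 H2 Hpqr; unfold lalescu.
  assert (nth_root n (INR (fact n)) < p) by (apply nth_root_lt; auto; apply INR_fact_lt_0).
  assert (q < nth_root (S n) (INR (fact (S n))))
    by (apply nth_root_gt; auto; apply INR_fact_lt_0).
  assert (nth_root (S (S n)) (INR (fact (S (S n)))) < r)
    by (apply nth_root_lt; auto; apply INR_fact_lt_0).
  lra.
Qed.

Ltac lalescu_small_case p q r :=
  apply (lalescu_succ_lt_of_root_bounds _ p q r); [lia | ..];
  rewrite ?INR_fact_S; simpl; lra.

Theorem mainTheorem1 : forall n : nat, (1 <= n)%nat -> lalescu (S n) < lalescu n.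
Proof.
  intros n Hn.
  destruct (Nat.le_gt_cases 8 n) as [Hlarge | Hsmall]; [exact (lalescu_succ_lt_large n Hlarge)|].
  destruct n as [|[|[|[|[|[|[|[|n]]]]]]]]; try lia.
  - lalescu_small_case (10001/10000) (14142/10000) (18172/10000).
  - lalescu_small_case (14143/10000) (18171/10000) (22134/10000).
  - lalescu_small_case (18172/10000) (22133/10000) (26052/10000).
  - lalescu_small_case (22134/10000) (26051/10000) (29938/10000).
  - lalescu_small_case (26052/10000) (29937/10000) (33801/10000).
  - lalescu_small_case (29938/10000) (33800/10000) (37644/10000).
  - lalescu_small_case (33801/10000) (37643/10000) (41472/10000).
Qed.
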